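(* There exist a constant $c>0$ and, for infinitely many positive integers $n$, a set $P_n$ of $n$ points in the plane such that every locally Gabriel graph on $P_n$ has dilation at least $c\sqrt{n}$.
   Context: A geometric graph $H=(P,F)$ on a finite point set $P\subset\mathbb{R}^2$ (edges drawn as straight segments) is a locally Gabriel graph (LGG) if for every edge $(u,v)\in F$, the closed disk having the segment $\overline{uv}$ as diameter contains no point of $P$ other than $u,v$ that is a neighbor of $u$ or of $v$ in $H$ (equivalently, no two edges $(u,v),(u,w)$ sharing an endpoint satisfy $\angle uwv\ge \pi/2$ or $\angle uvw\ge\pi/2$). For $u,v\in P$, let $D_H(u,v)$ be the length (sum of Euclidean edge lengths) of a shortest path from $u$ to $v$ in $H$ ($\infty$ if none exists) and $D_2(u,v)$ the Euclidean distance. The dilation of $H$ is $\max_{u\ne v\in P} D_H(u,v)/D_2(u,v)$. *)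

From Stdlib Require Import Reals List.
Import ListNotations.
Open Scope R_scope.

Definition point := (R * R)%type.

Definition dist2 (p q : point) : R :=
  sqrt ((fst p - fst q) ^ 2 + (snd p - snd q) ^ 2).

Definition geom_graph (P : list point) (F : point -> point -> Prop) : Prop :=
  (forall u v, F u v -> In u P /\ In v P /\ u <> v) /\
  (forall u v, F u v -> F v u).

(* w lies in the closed disk having segment uv as diameter *)
Definition in_diam_disk (u v w : point) : Prop :=
  (fst w - fst u) * (fst w - fst v) + (snd w - snd u) * (snd w - snd v) <= 0.

Definition LGG (P : list point) (F : point -> point -> Prop) : Prop :=
  geom_graph P F /\
  forall u v, F u v ->
    forall w, In w P -> w <> u -> w <> v -> (F u w \/ F v w) ->
      ~ in_diam_disk u v w.

Fixpoint is_walk (F : point -> point -> Prop) (x : point) (xs : list point)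
  : Prop :=
  match xs with
  | [] => True
  | y :: ys => F x y /\ is_walk F y ys
  end.

Fixpoint walk_length (x : point) (xs : list point) : R :=
  match xs with
  | [] => 0
  | y :: ys => dist2 x y + walk_length y ys
  end.

Definition walk_end (x : point) (xs : list point) : point := last xs x.

(* "dilation of H is at least K": there are u <> v in P with
   D_H(u,v) >= K * D_2(u,v), where D_H(u,v) is the minimum length of a
   path from u to v (infinite if none): i.e. every u-v walk in H has
   length at least K * D_2(u,v). *)
Definition dilation_at_least (P : list point) (F : point -> point -> Prop)
  (K : R) : Prop :=
  exists u v, In u P /\ In v P /\ u <> v /\
    forall xs, is_walk F u xs -> walk_end u xs = v ->
      walk_length u xs >= K * dist2 u v.

(* Place the points at integer distances q^2, ..., 2q^2 from the origin on two rays
   enclosing a small angle (tan of half the angle is 1/q); there are n = 2(q^2+1) of them.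
   On a collinear point set an LGG gives each vertex at most one neighbour per side, so
   near a ray the graph is a monotone path along it.  If two consecutive points of a ray
   are not adjacent, every walk between them must therefore leave a neighbourhood of
   radius q/4, which contains no point of the other ray.  If both rays are paths, the
   LGG condition forbids every edge between the rays except at the innermost points, so
   a walk between the two outermost points, at distance at most 4q, has length at least
   q^2.  Either way the dilation is at least q/4 >= sqrt(n)/8. *)
From Stdlib Require Import Reals Rgeom List FinFun Lra Lia Classical.
Open Scope R_scope.

Lemma dist2_dist_euc (p q : point) :
  dist2 p q = dist_euc (fst p) (snd p) (fst q) (snd q).
Proof. unfold dist2, dist_euc, Rsqr. f_equal. ring. Qed.

Lemma dist2_ge0 (p q : point) : 0 <= dist2 p q.
Proof. apply sqrt_pos. Qed.

Lemma dist2_refl (p : point) : dist2 p p = 0.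
Proof. rewrite dist2_dist_euc. apply distance_refl. Qed.

Lemma dist2_sym (p q : point) : dist2 p q = dist2 q p.
Proof. rewrite !dist2_dist_euc. apply distance_symm. Qed.

Lemma dist2_triangle (p q r : point) : dist2 p r <= dist2 p q + dist2 q r.
Proof. rewrite !dist2_dist_euc. apply triangle. Qed.

Lemma sqrt_le_of_le_sqr (x y : R) : 0 <= y -> x <= y * y -> sqrt x <= y.
Proof. intros Hy Hx. rewrite <- (sqrt_square y Hy). now apply sqrt_le_1_alt. Qed.

Lemma le_sqrt_of_sqr_le (x z : R) : x * x <= z -> x <= sqrt z.
Proof.
  intros H. destruct (Rle_dec x 0) as [Hx|Hx].
  - pose proof (sqrt_pos z); lra.
  - rewrite <- (sqrt_square x) by lra. now apply sqrt_le_1_alt.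
Qed.

Lemma dist2_ge_proj (p q : point) (e1 e2 : R) : e1 * e1 + e2 * e2 = 1 ->
  (fst p - fst q) * e1 + (snd p - snd q) * e2 <= dist2 p q.
Proof.
  intros He. unfold dist2. apply le_sqrt_of_sqr_le.
  set (x := fst p - fst q). set (y := snd p - snd q).
  assert (0 <= (x * e2 - y * e1) ^ 2) by apply pow2_ge_0.
  replace (x ^ 2 + y ^ 2) with ((x ^ 2 + y ^ 2) * (e1 * e1 + e2 * e2))
    by (rewrite He; ring).
  nra.
Qed.

Lemma walk_length_ge0 (x : point) (xs : list point) : 0 <= walk_length x xs.
Proof.
  revert x; induction xs as [|z zs IH]; intros x; simpl; [lra|].
  pose proof (dist2_ge0 x z); pose proof (IH z); lra.
Qed.

Lemma last_cons_default_irrel (y : point) (ys : list point) (d d' : point) :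
  last (y :: ys) d = last (y :: ys) d'.
Proof.
  revert y; induction ys as [|z zs IH]; intros y; [reflexivity|].
  exact (IH z).
Qed.

Lemma walk_end_cons (x z : point) (zs : list point) :
  walk_end x (z :: zs) = walk_end z zs.
Proof.
  unfold walk_end. destruct zs as [|y ys]; [reflexivity|].
  change (last (y :: ys) x = last (y :: ys) z).
  apply last_cons_default_irrel.
Qed.

Lemma dist2_walk_end_le (x : point) (xs : list point) :
  dist2 x (walk_end x xs) <= walk_length x xs.
Proof.
  revert x; induction xs as [|z zs IH]; intros x.
  - unfold walk_end; simpl. rewrite dist2_refl. lra.
  - rewrite walk_end_cons. simpl.
    pose proof (IH z). pose proof (dist2_triangle x z (walk_end z zs)). lra.
Qed.

Lemma walk_crosses (F : point -> point -> Prop) (A B : point -> Prop) :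
  (forall u v, F u v -> A v \/ B v) -> (forall y, A y -> B y -> False) ->
  forall xs x, is_walk F x xs -> A x -> B (walk_end x xs) ->
  exists p q, A p /\ B q /\ F p q /\
    dist2 x p + dist2 q (walk_end x xs) <= walk_length x xs.
Proof.
  intros Hcov Hdisj.
  induction xs as [|z zs IH]; intros x Hw HA HB; [exfalso; exact (Hdisj x HA HB)|].
  destruct Hw as [Hxz Hw]. rewrite walk_end_cons in *. simpl.
  destruct (Hcov _ _ Hxz) as [Hz|Hz].
  - destruct (IH z Hw Hz HB) as [p [q [Hp [Hq [Hpq Hl]]]]].
    exists p, q. repeat split; auto.
    pose proof (dist2_triangle x z p). lra.
  - exists x, z. repeat split; auto. rewrite dist2_refl.
    pose proof (dist2_walk_end_le z zs). pose proof (dist2_ge0 x z). lra.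
Qed.

Lemma dilation_at_least_le (P : list point) (F : point -> point -> Prop) (K K' : R) :
  K' <= K -> dilation_at_least P F K -> dilation_at_least P F K'.
Proof.
  intros HK [u [v [Hu [Hv [Huv Hwalk]]]]].
  exists u, v. repeat split; auto. intros xs Hw He.
  specialize (Hwalk xs Hw He). pose proof (dist2_ge0 u v). nra.
Qed.

Section LGGOnChain.

Variable P : list point.
Variable F : point -> point -> Prop.
Hypothesis HF : LGG P F.
Variable r : nat -> point.
Hypothesis r_inj : forall i j, r i = r j -> i = j.
Hypothesis r_between : forall p q v, ((p < q < v)%nat \/ (v < q < p)%nat) ->
  in_diam_disk (r v) (r p) (r q).

Lemma lgg_sym u v : F u v -> F v u.
Proof. destruct HF as [[_ H] _]. apply H. Qed.

Lemma lgg_edge u v : F u v -> In u P /\ In v P /\ u <> v.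
Proof. destruct HF as [[H _] _]. apply H. Qed.

Lemma chain_no_inner_neighbour v p u : F (r v) (r p) -> F (r v) (r u) ->
  ((p < u < v)%nat \/ (v < u < p)%nat) -> False.
Proof.
  intros Hvp Hvu Hu. destruct HF as [_ Hdisk].
  apply (Hdisk _ _ Hvp (r u)).
  - apply (lgg_edge _ _ Hvu).
  - intros E; apply r_inj in E; lia.
  - intros E; apply r_inj in E; lia.
  - left; exact Hvu.
  - apply r_between; lia.
Qed.

Lemma chain_neighbour_unique v p u : F (r v) (r p) -> F (r v) (r u) ->
  ((p < v /\ u < v)%nat \/ (v < p /\ v < u)%nat) -> p = u.
Proof.
  intros Hp Hu Hs.
  destruct (Nat.lt_trichotomy p u) as [H|[H|H]]; [exfalso| exact H |exfalso].
  - destruct Hs as [Hs|Hs];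
      [apply (chain_no_inner_neighbour v p u) | apply (chain_no_inner_neighbour v u p)];
      auto; lia.
  - destruct Hs as [Hs|Hs];
      [apply (chain_no_inner_neighbour v u p) | apply (chain_no_inner_neighbour v p u)];
      auto; lia.
Qed.

Inductive right_chain (k : nat) : nat -> Prop :=
| right_chain1 v : (k < v)%nat -> F (r k) (r v) -> right_chain k v
| right_chainS u v : right_chain k u -> (u < v)%nat -> F (r u) (r v) -> right_chain k v.

Inductive left_chain (k : nat) : nat -> Prop :=
| left_chain1 v : (v < k)%nat -> F (r k) (r v) -> left_chain k v
| left_chainS u v : left_chain k u -> (v < u)%nat -> F (r u) (r v) -> left_chain k v.

Lemma right_chain_gt k v : right_chain k v -> (k < v)%nat.
Proof. induction 1; lia. Qed.

Lemma left_chain_lt k v : left_chain k v -> (v < k)%nat.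
Proof. induction 1; lia. Qed.

(* By [chain_neighbour_unique], these are exactly the chain vertices reachable from
   [r k] by walks inside the chain. *)
Definition chain_component (k v : nat) : Prop :=
  v = k \/ right_chain k v \/ left_chain k v.

Lemma chain_component_step k v u :
  chain_component k v -> F (r v) (r u) -> chain_component k u.
Proof.
  intros Hv Hvu.
  assert (Hback : forall w, F (r w) (r v) -> ((w < v /\ u < v)%nat \/ (v < w /\ v < u)%nat) -> w = u)
    by (intros w Hw; apply chain_neighbour_unique; [apply lgg_sym|]; assumption).
  destruct (Nat.lt_trichotomy u v) as [Huv|[Huv|Huv]].
  - destruct Hv as [Hv|[Hv|Hv]].
    + subst. right; right. now apply left_chain1.
    + inversion Hv as [? Hkv Hk|w ? Hw Hwv Hwv']; subst.
      * left. symmetry. apply Hback; auto; lia.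
      * right; left. replace u with w by (apply Hback; auto; lia). exact Hw.
    + right; right. eapply left_chainS; eauto.
  - subst. exfalso. destruct (lgg_edge _ _ Hvu) as [_ [_ H]]. now apply H.
  - destruct Hv as [Hv|[Hv|Hv]].
    + subst. right; left. now apply right_chain1.
    + right; left. eapply right_chainS; eauto.
    + inversion Hv as [? Hkv Hk|w ? Hw Hwv Hwv']; subst.
      * left. symmetry. apply Hback; auto; lia.
      * right; right. replace u with w by (apply Hback; auto; lia). exact Hw.
Qed.

Section ShortWalks.

Variables (k : nat) (K : R).
Hypothesis near_on_chain : forall y, In y P -> dist2 (r k) y < K -> exists i, y = r i.

Lemma chain_short_walk_component xs v :
  is_walk F (r v) xs -> chain_component k v ->
  dist2 (r k) (r v) + walk_length (r v) xs < K ->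
  exists w, walk_end (r v) xs = r w /\ chain_component k w.
Proof.
  revert v; induction xs as [|z zs IH]; intros v Hw Hv Hl; [now exists v|].
  destruct Hw as [Hvz Hw]. simpl in Hl.
  pose proof (walk_length_ge0 z zs). pose proof (dist2_triangle (r k) (r v) z).
  destruct (near_on_chain z (proj1 (proj2 (lgg_edge _ _ Hvz)))) as [u ->]; [lra|].
  rewrite walk_end_cons.
  apply (IH u Hw (chain_component_step k v u Hv Hvz)).
  pose proof (dist2_triangle (r k) (r v) (r u)). lra.
Qed.

Lemma chain_short_walk_edge xs :
  is_walk F (r k) xs -> walk_end (r k) xs = r (S k) ->
  walk_length (r k) xs < K -> F (r k) (r (S k)).
Proof.
  intros Hw He Hl.
  destruct (chain_short_walk_component xs k Hw (or_introl eq_refl)) as [w [Hw1 Hw2]].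
  { rewrite dist2_refl. lra. }
  rewrite He in Hw1. apply r_inj in Hw1. subst w.
  destruct Hw2 as [H|[H|H]]; [lia| |apply left_chain_lt in H; lia].
  inversion H as [|u ? Hu Huk]; subst; auto.
  apply right_chain_gt in Hu. lia.
Qed.

End ShortWalks.

End LGGOnChain.

Definition ray (e1 e2 : R) (i : nat) : point := (INR i * e1, INR i * e2).

Section Ray.

Variables e1 e2 : R.
Hypothesis e_unit : e1 * e1 + e2 * e2 = 1.

Lemma ray_inj i j : ray e1 e2 i = ray e1 e2 j -> i = j.
Proof.
  unfold ray. intros E. injection E as E1 E2. apply INR_eq.
  assert (H : (INR i - INR j) * (e1 * e1 + e2 * e2) = 0).
  { replace ((INR i - INR j) * (e1 * e1 + e2 * e2)) with
      ((INR i * e1 - INR j * e1) * e1 + (INR i * e2 - INR j * e2) * e2) by ring.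
    rewrite E1, E2. ring. }
  rewrite e_unit in H. lra.
Qed.

Lemma ray_between p q v : ((p < q < v)%nat \/ (v < q < p)%nat) ->
  in_diam_disk (ray e1 e2 v) (ray e1 e2 p) (ray e1 e2 q).
Proof.
  intros H. unfold in_diam_disk, ray; cbn [fst snd].
  replace ((INR q * e1 - INR v * e1) * (INR q * e1 - INR p * e1) +
           (INR q * e2 - INR v * e2) * (INR q * e2 - INR p * e2))
    with ((INR q - INR v) * (INR q - INR p) * (e1 * e1 + e2 * e2)) by ring.
  rewrite e_unit, Rmult_1_r.
  destruct H as [[H1 H2]|[H1 H2]]; apply lt_INR in H1; apply lt_INR in H2; nra.
Qed.

Lemma dist2_ray_S k : dist2 (ray e1 e2 k) (ray e1 e2 (S k)) = 1.
Proof.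
  unfold dist2, ray; cbn [fst snd]. rewrite S_INR.
  replace ((INR k * e1 - (INR k + 1) * e1) ^ 2 + (INR k * e2 - (INR k + 1) * e2) ^ 2)
    with (e1 * e1 + e2 * e2) by ring.
  rewrite e_unit. apply sqrt_1.
Qed.

Lemma dist2_ray_ge i j : INR i - INR j <= dist2 (ray e1 e2 i) (ray e1 e2 j).
Proof.
  eapply Rle_trans; [|apply (dist2_ge_proj _ _ e1 e2 e_unit)].
  unfold ray; cbn [fst snd].
  replace ((INR i * e1 - INR j * e1) * e1 + (INR i * e2 - INR j * e2) * e2)
    with ((INR i - INR j) * (e1 * e1 + e2 * e2)) by ring.
  rewrite e_unit. lra.
Qed.

Lemma ray_missing_edge_dilation (P : list point) (F : point -> point -> Prop) k K :
  LGG P F -> In (ray e1 e2 k) P -> In (ray e1 e2 (S k)) P ->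
  (forall y, In y P -> dist2 (ray e1 e2 k) y < K -> exists i, y = ray e1 e2 i) ->
  ~ F (ray e1 e2 k) (ray e1 e2 (S k)) ->
  dilation_at_least P F K.
Proof.
  intros HF Hk HSk Hnear Hmiss.
  exists (ray e1 e2 k), (ray e1 e2 (S k)). repeat split; auto.
  { intros E. apply ray_inj in E. lia. }
  intros xs Hw He. rewrite dist2_ray_S, Rmult_1_r.
  apply Rnot_lt_ge. intros Hl. apply Hmiss.
  exact (chain_short_walk_edge P F HF (ray e1 e2) ray_inj ray_between k K Hnear xs Hw He Hl).
Qed.

End Ray.

Definition pyth_cos (Q : R) : R := (Q * Q - 1) / (Q * Q + 1).
Definition pyth_sin (Q : R) : R := 2 * Q / (Q * Q + 1).

Section PythagoreanDirection.

Variable Q : R.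
Hypothesis Q_ge2 : 2 <= Q.

Local Notation c := (pyth_cos Q).
Local Notation s := (pyth_sin Q).

Let den_pos : 0 < Q * Q + 1.
Proof. nra. Qed.

Lemma pyth_cos_mul : c * (Q * Q + 1) = Q * Q - 1.
Proof. unfold pyth_cos. field. lra. Qed.

Lemma pyth_sin_mul : s * (Q * Q + 1) = 2 * Q.
Proof. unfold pyth_sin. field. lra. Qed.

Lemma pyth_unit : c * c + s * s = 1.
Proof. unfold pyth_cos, pyth_sin. field. lra. Qed.

Lemma pyth_cos_pos : 0 < c.
Proof. unfold pyth_cos. apply Rdiv_lt_0_compat; nra. Qed.

Lemma pyth_sin_pos : 0 < s.
Proof. unfold pyth_sin. apply Rdiv_lt_0_compat; nra. Qed.

Lemma pyth_sin_ge : Q / 4 <= Q * Q * s.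
Proof.
  apply (Rmult_le_reg_r (Q * Q + 1)); [lra|].
  replace (Q * Q * s * (Q * Q + 1)) with (Q * Q * (s * (Q * Q + 1))) by ring.
  rewrite pyth_sin_mul. nra.
Qed.

Lemma pyth_sin_sqr_ge : 2 <= Q * Q * (s * s).
Proof.
  apply (Rmult_le_reg_r ((Q * Q + 1) * (Q * Q + 1))); [nra|].
  replace (Q * Q * (s * s) * ((Q * Q + 1) * (Q * Q + 1)))
    with (Q * Q * ((s * (Q * Q + 1)) * (s * (Q * Q + 1)))) by ring.
  rewrite pyth_sin_mul.
  assert (H4 : 4 <= Q * Q) by nra.
  replace (Q * Q * (2 * Q * (2 * Q))) with (4 * (Q * Q) * (Q * Q)) by ring.
  revert H4. generalize (Q * Q). intros t Ht. nra.
Qed.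

Lemma pyth_chord : (2 * (Q * Q)) * (2 * (Q * Q)) * (2 - 2 * c) <= (4 * Q) * (4 * Q).
Proof.
  apply (Rmult_le_reg_r (Q * Q + 1)); [lra|].
  replace (2 * (Q * Q) * (2 * (Q * Q)) * (2 - 2 * c) * (Q * Q + 1))
    with (8 * (Q * Q) * (Q * Q) * (Q * Q + 1) - 8 * (Q * Q) * (Q * Q) * (c * (Q * Q + 1)))
    by ring.
  rewrite pyth_cos_mul. nra.
Qed.

(* The two LGG conditions excluding an edge a_I b_J between the rays, with a_(I-1)
   and b_(J-1) as the offending neighbours, are incompatible once I >= Q^2. *)
Lemma pyth_no_cross (I J : R) : Q * Q <= I -> I - 1 < J * c -> J - 1 < I * c -> False.
Proof.
  intros HI H1 H2.
  pose proof pyth_unit. pose proof pyth_cos_pos. pose proof pyth_sin_sqr_ge.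
  assert (J * c < I * c * c + c) by nra.
  assert (I * (s * s) < 1 + c) by (replace (s * s) with (1 - c * c) by lra; nra).
  assert (Q * Q * (s * s) <= I * (s * s)) by nra.
  nra.
Qed.

End PythagoreanDirection.

Definition two_rays (q : nat) : list point :=
  map (ray 1 0) (seq (q * q) (S (q * q))) ++
  map (ray (pyth_cos (INR q)) (pyth_sin (INR q))) (seq (q * q) (S (q * q))).

Section TwoRays.

Variable q : nat.
Hypothesis q_ge2 : (2 <= q)%nat.

Local Notation Q := (INR q).
Local Notation L := (q * q)%nat.
Local Notation m := (q * q + q * q)%nat.
Local Notation c := (pyth_cos (INR q)).
Local Notation s := (pyth_sin (INR q)).
Local Notation a := (ray 1 0).
Local Notation b := (ray (pyth_cos (INR q)) (pyth_sin (INR q))).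

Let Q_ge2 : 2 <= Q.
Proof. apply le_INR in q_ge2. simpl in q_ge2. lra. Qed.

Let a_unit : 1 * 1 + 0 * 0 = 1.
Proof. ring. Qed.

Let b_unit : c * c + s * s = 1.
Proof. exact (pyth_unit Q Q_ge2). Qed.

Let INR_L : INR L = Q * Q.
Proof. apply mult_INR. Qed.

Lemma in_two_rays y : In y (two_rays q) <->
  (exists i, (L <= i <= m)%nat /\ y = a i) \/ (exists j, (L <= j <= m)%nat /\ y = b j).
Proof.
  unfold two_rays. rewrite in_app_iff, !in_map_iff.
  split; intros [[i [E H]]|[i [E H]]]; [left|right|left|right]; exists i;
    rewrite ?in_seq in *; split; auto; lia.
Qed.

Lemma a_neq_b i j : (0 < j)%nat -> a i <> b j.
Proof.
  intros Hj E. unfold ray in E. injection E as _ E.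
  apply lt_0_INR in Hj. pose proof (pyth_sin_pos Q Q_ge2). nra.
Qed.

Let a_in i : (L <= i <= m)%nat -> In (a i) (two_rays q).
Proof. intros Hi. apply in_two_rays. left. now exists i. Qed.

Let b_in j : (L <= j <= m)%nat -> In (b j) (two_rays q).
Proof. intros Hj. apply in_two_rays. right. now exists j. Qed.

Lemma two_rays_NoDup : NoDup (two_rays q).
Proof.
  assert (Hray : forall e1 e2, e1 * e1 + e2 * e2 = 1 -> NoDup (map (ray e1 e2) (seq L (S L)))).
  { intros e1 e2 He. apply FinFun.Injective_map_NoDup; [exact (ray_inj e1 e2 He)|].
    apply seq_NoDup. }
  apply NoDup_app; [exact (Hray _ _ a_unit)|exact (Hray _ _ b_unit)|].
  intros y Hy1 Hy2. apply in_map_iff in Hy1, Hy2.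
  destruct Hy1 as [i [<- _]]. destruct Hy2 as [j [E Hj]]. apply in_seq in Hj.
  apply (a_neq_b i j); [nia|congruence].
Qed.

Lemma two_rays_length : length (two_rays q) = (2 * (L + 1))%nat.
Proof. unfold two_rays. rewrite length_app, !length_map, length_seq. lia. Qed.

Lemma dist2_a_b i j : (L <= i)%nat -> Q / 4 <= dist2 (a i) (b j).
Proof.
  intros Hi. apply le_INR in Hi. rewrite INR_L in Hi.
  eapply Rle_trans; [|apply (dist2_ge_proj _ _ s (- c)); lra].
  unfold ray; cbn [fst snd].
  replace ((INR i * 1 - INR j * c) * s + (INR i * 0 - INR j * s) * - c) with (INR i * s) by ring.
  pose proof (pyth_sin_ge Q Q_ge2). pose proof (pyth_sin_pos Q Q_ge2). nra.
Qed.

Lemma dist2_b_a i j : (L <= i)%nat -> Q / 4 <= dist2 (b i) (a j).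
Proof.
  intros Hi. apply le_INR in Hi. rewrite INR_L in Hi.
  eapply Rle_trans; [|apply (dist2_ge_proj _ _ 0 1); lra].
  unfold ray; cbn [fst snd].
  replace ((INR i * c - INR j * 1) * 0 + (INR i * s - INR j * 0) * 1) with (INR i * s) by ring.
  pose proof (pyth_sin_ge Q Q_ge2). pose proof (pyth_sin_pos Q Q_ge2). nra.
Qed.

Lemma a_missing_edge_dilation F i : LGG (two_rays q) F -> (L <= i < m)%nat ->
  ~ F (a i) (a (S i)) -> dilation_at_least (two_rays q) F (Q / 4).
Proof.
  intros HF Hi. apply ray_missing_edge_dilation; auto; [apply a_in; lia|apply a_in; lia|].
  intros y Hy Hd. apply in_two_rays in Hy as [[j [_ ->]]|[j [_ ->]]]; [now exists j|].
  pose proof (dist2_a_b i j (proj1 Hi)). lra.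
Qed.

Lemma b_missing_edge_dilation F i : LGG (two_rays q) F -> (L <= i < m)%nat ->
  ~ F (b i) (b (S i)) -> dilation_at_least (two_rays q) F (Q / 4).
Proof.
  intros HF Hi. apply ray_missing_edge_dilation; auto; [apply b_in; lia|apply b_in; lia|].
  intros y Hy Hd. apply in_two_rays in Hy as [[j [_ ->]]|[j [_ ->]]]; [|now exists j].
  pose proof (dist2_b_a i j (proj1 Hi)). lra.
Qed.

Lemma dist2_outer_ends : dist2 (a m) (b m) <= 4 * Q.
Proof.
  unfold dist2, ray; cbn [fst snd].
  rewrite plus_INR, INR_L. apply sqrt_le_of_le_sqr; [lra|].
  eapply Rle_trans; [|apply (pyth_chord Q Q_ge2)]. right.
  replace (((Q * Q + Q * Q) * 0 - (Q * Q + Q * Q) * s) ^ 2)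
    with ((2 * (Q * Q)) ^ 2 * (s * s)) by ring.
  replace (s * s) with (1 - c * c) by lra. ring.
Qed.

Section BothRaysConnected.

Variable F : point -> point -> Prop.
Hypothesis HF : LGG (two_rays q) F.
Hypothesis a_path : forall i, (L <= i < m)%nat -> F (a i) (a (S i)).
Hypothesis b_path : forall i, (L <= i < m)%nat -> F (b i) (b (S i)).

Lemma no_edge_between_rays i j : (L < i <= m)%nat -> (L < j <= m)%nat -> ~ F (a i) (b j).
Proof.
  intros Hi Hj Hab.
  destruct i as [|i]; [lia|]. destruct j as [|j]; [lia|].
  destruct HF as [HG Hdisk].
  assert (Hai : ~ in_diam_disk (a (S i)) (b (S j)) (a i)).
  { apply (Hdisk _ _ Hab).
    - apply a_in. lia.
    - intros E. apply ray_inj in E; [lia|exact a_unit].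
    - apply a_neq_b. lia.
    - left. apply (lgg_sym _ _ HF). apply a_path. lia. }
  assert (Hbj : ~ in_diam_disk (b (S j)) (a (S i)) (b j)).
  { apply (Hdisk _ _ (lgg_sym _ _ HF _ _ Hab)).
    - apply b_in. lia.
    - intros E. apply ray_inj in E; [lia|exact b_unit].
    - intros E. symmetry in E. revert E. apply a_neq_b. lia.
    - left. apply (lgg_sym _ _ HF). apply b_path. lia. }
  unfold in_diam_disk, ray in Hai, Hbj. cbn [fst snd] in Hai, Hbj.
  rewrite !S_INR in Hai, Hbj.
  apply Rnot_le_lt in Hai. apply Rnot_le_lt in Hbj.
  assert (HQ : Q * Q <= INR i + 1) by (rewrite <- INR_L, <- S_INR; apply le_INR; lia).
  apply (pyth_no_cross Q Q_ge2 (INR i + 1) (INR j + 1) HQ).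
  - lra.
  - assert (INR j * (c * c + s * s) = INR j) by (rewrite b_unit; ring). lra.
Qed.

Lemma both_rays_connected_dilation : dilation_at_least (two_rays q) F (Q / 4).
Proof.
  set (on_a y := exists i, (L <= i <= m)%nat /\ y = a i).
  set (on_b y := exists j, (L <= j <= m)%nat /\ y = b j).
  assert (Ha : forall i, (L <= i <= m)%nat -> on_a (a i)) by (intros i Hi; now exists i).
  assert (Hb : forall j, (L <= j <= m)%nat -> on_b (b j)) by (intros j Hj; now exists j).
  exists (a m), (b m). repeat split.
  - apply a_in. lia.
  - apply b_in. lia.
  - apply a_neq_b. lia.
  - intros xs Hw Hend.
    destruct (walk_crosses F on_a on_b) with (xs := xs) (x := a m)
      as [p [p' [[i [Hi ->]] [[j [Hj ->]] [Hij Hlen]]]]]; auto.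
    + intros u v Huv. apply in_two_rays. apply (lgg_edge _ _ HF _ _ Huv).
    + intros y [i [Hi ->]] [j [Hj E]]. revert E. apply a_neq_b. lia.
    + apply Ha. lia.
    + rewrite Hend. apply Hb. lia.
    + rewrite Hend in Hlen.
      assert (Hinner : i = L \/ j = L).
      { destruct (Nat.eq_dec i L); auto. destruct (Nat.eq_dec j L); auto.
        exfalso. apply (no_edge_between_rays i j); auto; lia. }
      pose proof (dist2_ray_ge 1 0 a_unit m i) as Hai.
      pose proof (dist2_ray_ge _ _ b_unit m j) as Hbj. rewrite dist2_sym in Hbj.
      assert (INR i <= INR m /\ INR j <= INR m) as [Him Hjm] by (split; apply le_INR; lia).
      assert (Hm : INR m = 2 * (Q * Q)) by (rewrite plus_INR, INR_L; ring).
      assert (Hwalk : Q * Q <= walk_length (a m) xs).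
      { destruct Hinner as [->| ->]; rewrite INR_L, Hm in *; lra. }
      pose proof dist2_outer_ends. pose proof (dist2_ge0 (a m) (b m)). nra.
Qed.

End BothRaysConnected.

Lemma two_rays_dilation F : LGG (two_rays q) F -> dilation_at_least (two_rays q) F (Q / 4).
Proof.
  intros HF.
  destruct (classic (forall i, (L <= i < m)%nat -> F (a i) (a (S i)))) as [Ha|Ha].
  2:{ apply not_all_ex_not in Ha as [i Hi]. apply imply_to_and in Hi as [Hi Hn].
      exact (a_missing_edge_dilation F i HF Hi Hn). }
  destruct (classic (forall i, (L <= i < m)%nat -> F (b i) (b (S i)))) as [Hb|Hb].
  2:{ apply not_all_ex_not in Hb as [i Hi]. apply imply_to_and in Hi as [Hi Hn].
      exact (b_missing_edge_dilation F i HF Hi Hn). }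
  exact (both_rays_connected_dilation F HF Ha Hb).
Qed.

End TwoRays.

Theorem lemma6 :
  exists c : R, 0 < c /\
    forall N : nat, exists n : nat, (N <= n)%nat /\ (0 < n)%nat /\
      exists P : list point, NoDup P /\ length P = n /\
        forall F : point -> point -> Prop, LGG P F ->
          dilation_at_least P F (c * sqrt (INR n)).
Proof.
  exists (1 / 8). split; [lra|]. intros N.
  set (q := (N + 2)%nat).
  exists (2 * (q * q + 1))%nat. split; [nia|]. split; [lia|].
  exists (two_rays q). split; [apply two_rays_NoDup; lia|].
  split; [apply two_rays_length; lia|].
  intros F HF. apply dilation_at_least_le with (K := INR q / 4).
  - assert (HQ : 2 <= INR q) by (unfold q; rewrite plus_INR; simpl; pose proof (pos_INR N); lra).
    assert (sqrt (INR (2 * (q * q + 1))) <= 2 * INR q); [|lra].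
    apply sqrt_le_of_le_sqr; [lra|].
    rewrite mult_INR, plus_INR, mult_INR. simpl. nra.
  - apply two_rays_dilation; [lia|exact HF].
Qed.
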